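(* Let $d\ge1$ and $k\ge1$ be integers and let $G=(V,D)$ be a $k$-fold $\mathcal{R}_d$-circuit with at most two technicolour vertices. Then $G$ is a balanced $k$-fold $\mathcal{R}_d$-circuit.
   Context: For a graph $G=(V,E)$ and a generic $p:V\to\mathbb{R}^d$ (coordinates algebraically independent over $\mathbb{Q}$), the rigidity matrix $R(G,p)$ is the $|E|\times d|V|$ matrix whose row for $uv\in E$ has $p(u)-p(v)$ in the $d$ columns of $u$, $p(v)-p(u)$ in the $d$ columns of $v$, and zeros elsewhere. The generic $d$-dimensional rigidity matroid $\mathcal{R}_d$ is the row matroid of this matrix for the complete graph on a vertex set containing $V$; its rank function is $r_d$ and closure operator $\mathrm{cl}(X)=\{x: r_d(X\cup\{x\})=r_d(X)\}$. Graphs are identified with their edge sets. A set $D$ of edges is cyclic if it is a union of circuits of $\mathcal{R}_d$. For $k\ge0$, a graph $G=(V,D)$ is a $k$-fold $\mathcal{R}_d$-circuit if $D$ is cyclic and $r_d(D)=|D|-k$. For $k\ge1$, the principal partition of $D$ is the partition $\{A_1,\dots,A_\ell\}$ of $D$ such that $\{D\setminus A_i\}$ is exactly the set of $(k-1)$-fold $\mathcal{R}_d$-circuits contained in $D$. A vertex is technicolour if it is incident with edges of $D$ from at least two different parts of the principal partition, and monochromatic otherwise. $G$ is balanced if $r_d\big(\bigcap_{i=1}^\ell \mathrm{cl}(D\setminus A_i)\big)=\ell-k$. *)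

From HB Require Import structures.
From mathcomp Require Import all_boot all_order all_algebra.
From mathcomp Require Import boolp Rstruct.
From Stdlib Require Rdefinitions.

Set Implicit Arguments.
Unset Strict Implicit.
Unset Printing Implicit Defensive.

Import Order.TTheory GRing.Theory Num.Theory.
Local Open Scope ring_scope.

(* Vertices of the complete graph K_n are 'I_n; an edge uv is the ordered
   pair (u,v) with u < v. *)
Definition edge (n : nat) := {x : 'I_n * 'I_n | (nat_of_ord x.1 < nat_of_ord x.2)%N}.

(* A placement (framework) p : vertices -> R^d, stored as an n x d matrix;
   row w of p is p(w). *)
Definition placement (n d : nat) := 'M[Rdefinitions.R]_(n, d).

Definition rigidity_row n d (p : placement n d) (e : edge n) : 'rV[Rdefinitions.R]_(n * d) :=
  let u := (val e).1 in let v := (val e).2 in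
  mxvec (\matrix_(w < n, i < d)
           (if w == u then p u i - p v i
            else if w == v then p v i - p u i else 0)).

Definition rig_rank n d (p : placement n d) (X : {set edge n}) : nat :=
  \rank (\sum_(e in X) <<rigidity_row p e>>)%MS.

(* Generic d-dimensional rigidity rank r_d: the rank attained at a generic
   placement, which is the maximum of rig_rank over all real placements. *)
Definition rd n d (X : {set edge n}) : nat :=
  \max_(k < #|X|.+1 | `[< exists p : placement n d, rig_rank p X = k >]) k.

Definition rcl n d (X : {set edge n}) : {set edge n} :=
  [set x | rd d (x |: X) == rd d X].

Definition independent n d (X : {set edge n}) : bool := rd d X == #|X|.

Definition circuit n d (C : {set edge n}) : bool :=
  ~~ independent d C && [forall Y : {set edge n}, (Y \proper C) ==> independent d Y].

Definition cyclic n d (D : {set edge n}) : bool :=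
  [forall e in D, exists C : {set edge n}, [&& circuit d C, C \subset D & e \in C]].

Definition kfold_circuit n d (k : nat) (D : {set edge n}) : bool :=
  cyclic d D && (rd d D + k == #|D|)%N.

Definition principal_partition n d (k : nat) (D : {set edge n})
    (P : {set {set edge n}}) : bool :=
  partition P D &&
  ([set D :\: A | A in P] == [set S : {set edge n} | (S \subset D) && kfold_circuit d k.-1 S]).

Definition incident n (v : 'I_n) (e : edge n) : bool :=
  ((val e).1 == v) || ((val e).2 == v).

Definition technicolour n (D : {set edge n}) (P : {set {set edge n}}) : {set 'I_n} :=
  [set v | [exists A in P, exists B in P,
     (A != B) && [exists e in A, exists f in B, incident v e && incident v f]]].

Definition balanced n d (k : nat) (D : {set edge n}) (P : {set {set edge n}}) : Prop :=
  (rd d (\bigcap_(A in P) rcl d (D :\: A)))%:Z = (#|P|%:Z - k%:Z)%R.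

(* Fix a generic placement [p], one realising [r_d] on every edge set at once:
   it exists because along a line of placements the rank of a rigidity matrix
   drops only at the roots of a nonzero minor.  Let [U] be the intersection of
   the row spaces of [D] and of all [D \ A_i].  Since each [D \ A_i] is a
   [(k-1)]-fold circuit, these row spaces drop in rank independently, so
   [rank U = l - k].  A vector of [U] is a combination of rigidity rows, hence
   an equilibrium load (zero net force and torque), and it vanishes at every
   monochromatic vertex, which meets no edge of [D \ A] for its colour [A].
   An equilibrium load carried by at most two vertices is zero or a multiple
   of the row of the edge joining them; that edge then lies in every
   [cl(D \ A_i)], so the closures meet in a set of rank [rank U]. *)

From mathcomp Require Import all_boot all_order all_algebra.
From mathcomp Require Import boolp Rstruct ring zify.
From Stdlib Require Rdefinitions.

Set Implicit Arguments.
Unset Strict Implicit.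
Unset Printing Implicit Defensive.

Import Order.TTheory GRing.Theory Num.Theory.
Local Open Scope ring_scope.

Definition almost_all (R : idomainType) (Q : R -> Prop) :=
  exists2 P : {poly R}, P != 0 & forall t, ~~ root P t -> Q t.

Section AlmostAll.
Variable R : numDomainType.
Implicit Type Q : R -> Prop.

Lemma almost_all_exists Q : almost_all Q -> exists t, Q t.
Proof.
case=> P P_neq0 QP; apply: contrapT => noQ.
pose rs : seq R := [seq i%:R | i <- iota 0 (size P)].
have rs_roots : all (root P) rs.
  by apply/allP => t _; apply: contraT => /QP Qt; case: noQ; exists t.
have rs_uniq : uniq rs.
  by rewrite map_inj_uniq ?iota_uniq // => i j /eqP; rewrite eqr_nat => /eqP.
by have := max_poly_roots P_neq0 rs_roots rs_uniq; rewrite size_map size_iota ltnn.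
Qed.

Lemma almost_all_all_in (T : eqType) (s : seq T) (Q : T -> R -> Prop) :
  (forall y, y \in s -> almost_all (Q y)) ->
  almost_all (fun t => forall y, y \in s -> Q y t).
Proof.
elim: s => [_|x s IHs Qs]; first by exists 1 => [|t _ y]; rewrite ?oner_eq0.
have [P P_neq0 QxP] := Qs x (mem_head x s).
have [P' P'_neq0 QsP'] : almost_all (fun t => forall y, y \in s -> Q y t).
  by apply: IHs => y ys; apply: Qs; rewrite inE ys orbT.
exists (P * P') => [|t]; first by rewrite mulf_neq0.
rewrite rootM negb_or => /andP[Pt P't] y; rewrite inE => /predU1P[-> | ys].
  exact: QxP.
exact: QsP'.
Qed.

End AlmostAll.

Section RankPencil.
Variables (F : fieldType) (m N : nat).
Implicit Types A B : 'M[F]_(m, N).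

Lemma mxrank_mxsub r s (f : 'I_r -> 'I_m) (g : 'I_s -> 'I_N) A :
  (\rank (mxsub f g A) <= \rank A)%N.
Proof.
rewrite mxsubrc (leq_trans (mxrankS (rowsub_sub _ _))) //.
by rewrite -mxrank_tr trmx_mxsub -[leqRHS]mxrank_tr mxrankS ?rowsub_sub.
Qed.

Lemma unitmx_minor A :
  exists (f : 'I_(\rank A) -> 'I_m) (g : 'I_(\rank A) -> 'I_N), mxsub f g A \in unitmx.
Proof.
have fullAT : row_full (rowsub (maxrankfun A) A)^T.
  by rewrite /row_full mxrank_tr; exact: maxrowsub_free.
exists (maxrankfun A), (fullrankfun fullAT).
rewrite -unitmx_tr; have := fullrowsub_unit fullAT.
by congr (_ \in unitmx); apply/matrixP => i j; rewrite !mxE.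
Qed.

Lemma almost_all_rank_pencil A B r t0 : (r <= \rank (A + t0 *: B)%R)%N ->
  almost_all (fun t => r <= \rank (A + t *: B)%R)%N.
Proof.
move=> le_r; have [f [g unit_minor]] := unitmx_minor (A + t0 *: B).
pose M := mxsub f g (map_mx polyC A + 'X *: map_mx polyC B).
have evalM t : map_mx (horner_eval t) M = mxsub f g (A + t *: B).
  by apply/matrixP => i j; rewrite !mxE /horner_eval hornerD hornerC mulrC hornerMX hornerC mulrC.
have hornerM t : (\det M).[t] = \det (mxsub f g (A + t *: B)).
  by rewrite -evalM det_map_mx.
exists (\det M).
  by apply: contraTneq unit_minor => detM0; rewrite unitmxE unitfE -hornerM detM0 horner0 eqxx.
move=> t; rewrite /root hornerM -unitfE -unitmxE => /mxrank_unit rank_minor.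
by apply: leq_trans le_r _; rewrite -[X in (X <= _)%N]rank_minor mxrank_mxsub.
Qed.

End RankPencil.

Local Notation R := Rdefinitions.R.

Section Edges.
Variable n : nat.

Lemma edge_neq (e : edge n) : (val e).1 != (val e).2.
Proof. by rewrite -(inj_eq val_inj) neq_ltn (valP e). Qed.

Lemma exists_edge_pair (a b : 'I_n) : a != b ->
  exists e : edge n, forall w, incident w e = (w \in [set a; b]).
Proof.
move=> neq_ab; wlog lt_ab : a b neq_ab / (a < b)%N.
  move=> wlog_ab; have [lt_ab | lt_ba | eq_ab] := ltngtP a b; first exact: wlog_ab.
    have [|e incE] := wlog_ab b a _ lt_ba; first by rewrite eq_sym.
    by exists e => w; rewrite incE !inE orbC.
  by rewrite (val_inj eq_ab) eqxx in neq_ab.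
by exists (exist _ (a, b) lt_ab) => w; rewrite /incident !inE /= !(eq_sym w).
Qed.

End Edges.

Section RigidityMatrix.
Variables n d : nat.
Implicit Types (p q : placement n d) (e : edge n) (X Y : {set edge n}).

Definition rigidity_mx p e : 'M[R]_(n, d) :=
  \matrix_(w, i) (if w == (val e).1 then p (val e).1 i - p (val e).2 i
                  else if w == (val e).2 then p (val e).2 i - p (val e).1 i else 0).

Lemma rigidity_rowE p e : rigidity_row p e = mxvec (rigidity_mx p e).
Proof. by []. Qed.

Lemma rigidity_rowDZ p q t e :
  rigidity_row (p + t *: q) e = rigidity_row p e + t *: rigidity_row q e.
Proof.
rewrite !rigidity_rowE -linearZ -linearD; congr mxvec; apply/matrixP => w i.
by rewrite !mxE; do 2?case: ifP => _; rewrite ?mxE; ring.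
Qed.

Lemma rigidity_row_eq0 p e :
  (rigidity_row p e == 0) = [forall i, p (val e).1 i == p (val e).2 i].
Proof.
rewrite rigidity_rowE mxvec_eq0; apply/eqP/forallP => [M0 i | eq_ends].
  by have /matrixP/(_ (val e).1 i)/eqP := M0; rewrite !mxE eqxx subr_eq0.
apply/matrixP => w i; rewrite !mxE (eqP (eq_ends i)) subrr.
by do 2?case: ifP.
Qed.

(* [rig_rank p Y] as the rank of a single matrix, which is linear in [p]. *)
Definition rigidity_matrix p Y : 'M[R]_(#|{: edge n}|, n * d) :=
  \matrix_i (if enum_val i \in Y then rigidity_row p (enum_val i) else 0).

Lemma rigidity_matrixDZ p q t Y :
  rigidity_matrix (p + t *: q) Y = rigidity_matrix p Y + t *: rigidity_matrix q Y.
Proof.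
apply/row_matrixP => i; rewrite linearD linearZ /= !rowK rigidity_rowDZ.
by case: ifP => _ //; rewrite scaler0 addr0.
Qed.

Lemma rank_rigidity_matrix p Y : \rank (rigidity_matrix p Y) = rig_rank p Y.
Proof.
apply/eqmx_rank/andP; split.
  apply/row_subP => i; rewrite rowK; case: ifP => [Yi | _]; last exact: sub0mx.
  by apply: (sumsmx_sup (enum_val i)) => //; rewrite genmxE.
apply/sumsmx_subP => e Ye; rewrite genmxE.
by have := row_sub (enum_rank e) (rigidity_matrix p Y); rewrite rowK enum_rankK Ye.
Qed.

Lemma rig_rank_le_card p Y : (rig_rank p Y <= #|Y|)%N.
Proof.
apply: leq_trans (mxrank_sum_leqif _).1 _; rewrite -sum1_card leq_sum // => e _.
by rewrite /= mxrank_gen rank_leq_row.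
Qed.

Lemma rig_rank_le_rd p Y : (rig_rank p Y <= rd d Y)%N.
Proof.
have ltYp : (rig_rank p Y < #|Y|.+1)%N by rewrite ltnS rig_rank_le_card.
apply: (@leq_bigmax_cond _ _ _ (Ordinal ltYp)).
by apply/asboolP; exists p.
Qed.

Lemma rd_attained Y : exists p, rig_rank p Y = rd d Y.
Proof.
pose p0 : placement n d := 0.
have lt0Y : (rig_rank p0 Y < #|Y|.+1)%N by rewrite ltnS rig_rank_le_card.
pose attained (k : 'I_#|Y|.+1) := `[< exists p, rig_rank p Y = k >].
have attained0 : (0 < #|attained|)%N.
  by apply/card_gt0P; exists (Ordinal lt0Y); apply/asboolP; exists p0.
rewrite /rd; have [k /asboolP attained_k ->] := eq_bigmax_cond (fun k => nat_of_ord k) attained0.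
exact: attained_k.
Qed.

Lemma rig_rank_set1 p e : rig_rank p [set e] = (rigidity_row p e != 0).
Proof. by rewrite /rig_rank big_set1 mxrank_gen rank_rV. Qed.

Definition generic_placement p := forall Y, rig_rank p Y = rd d Y.

Lemma almost_all_rig_rank p q Y r t0 : (r <= rig_rank (p + t0 *: q)%R Y)%N ->
  almost_all (fun t => r <= rig_rank (p + t *: q)%R Y)%N.
Proof.
rewrite -rank_rigidity_matrix rigidity_matrixDZ => /almost_all_rank_pencil[P P_neq0 rankP].
by exists P => // t /rankP; rewrite -rank_rigidity_matrix rigidity_matrixDZ.
Qed.

(* Move along the line from a placement that is generic for the sets of [s]
   towards one attaining [rd d X]: all but finitely many points of the line
   serve for [X :: s]. *)
Lemma generic_placement_exists : exists p, generic_placement p.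
Proof.
suff [p rd_le] : exists p, forall Y, Y \in enum {: {set edge n}} -> (rd d Y <= rig_rank p Y)%N.
  by exists p => Y; apply/eqP; rewrite eqn_leq rig_rank_le_rd rd_le ?mem_enum.
elim: (enum _) => [|X s [q rd_le]]; first by exists 0.
have [pX pX_rd] := rd_attained X.
pose line t := q + t *: (pX - q).
have line_rd Y : Y \in X :: s -> almost_all (fun t => rd d Y <= rig_rank (line t) Y)%N.
  rewrite /line inE => /predU1P[-> | sY].
    by apply: (almost_all_rig_rank (t0 := 1)); rewrite scale1r addrC subrK pX_rd.
  by apply: (almost_all_rig_rank (t0 := 0)); rewrite scale0r addr0 rd_le.
have [t line_t] := almost_all_exists (almost_all_all_in line_rd).
by exists (line t).
Qed.

Lemma generic_rigidity_row_neq0 p e : (0 < d)%N -> generic_placement p ->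
  rigidity_row p e != 0.
Proof.
move=> d_gt0 p_gen; pose q : placement n d := \matrix_(w, i) (w == (val e).1)%:R.
have q_row_neq0 : rigidity_row q e != 0.
  rewrite rigidity_row_eq0 negb_forall; apply/existsP; exists (Ordinal d_gt0).
  by rewrite !mxE eqxx (eq_sym (val e).2) (negbTE (edge_neq e)) oner_neq0.
rewrite -[_ != 0]lt0b -rig_rank_set1 p_gen (leq_trans _ (rig_rank_le_rd q _)) //.
by rewrite rig_rank_set1 lt0b; exact: q_row_neq0.
Qed.

End RigidityMatrix.

Section RigiditySpace.
Variables (n d : nat) (p : placement n d).
Implicit Types (e x : edge n) (X Y : {set edge n}).

Definition rigspace X : 'M[R]_(n * d) := (\sum_(e in X) <<rigidity_row p e>>)%MS.

Lemma rig_rank_rigspace X : rig_rank p X = \rank (rigspace X).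
Proof. by []. Qed.

Lemma rigidity_row_sub X e : e \in X -> (rigidity_row p e <= rigspace X)%MS.
Proof. by move=> Xe; apply: (sumsmx_sup e) => //; rewrite genmxE. Qed.

Lemma rigspace_sub X m (M : 'M_(m, n * d)) :
  (forall e, e \in X -> (rigidity_row p e <= M)%MS) -> (rigspace X <= M)%MS.
Proof. by move=> sXM; apply/sumsmx_subP => e Xe; rewrite genmxE sXM. Qed.

Lemma rigspaceS X Y : X \subset Y -> (rigspace X <= rigspace Y)%MS.
Proof. by move=> sXY; apply: rigspace_sub => e Xe; rewrite rigidity_row_sub ?(subsetP sXY). Qed.

Lemma rcl_rigspace : generic_placement p ->
  forall X x, (x \in rcl d X) = (rigidity_row p x <= rigspace X)%MS.
Proof.
move=> p_gen X x; rewrite inE -!p_gen !rig_rank_rigspace.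
have [Xx | Xx] := boolP (x \in X).
  by rewrite (setUidPr _) ?sub1set // eqxx rigidity_row_sub.
rewrite /rigspace big_setU1 //= -/(rigspace X).
by rewrite eq_sym (mxrank_leqif_sup (addsmxSr _ _)).2 addsmx_sub genmxE submx_refl andbT.
Qed.

Lemma rigspace_lincomb X y : (y <= rigspace X)%MS ->
  exists c : edge n -> R, vec_mx y = \sum_(e in X) c e *: rigidity_mx p e.
Proof.
case/sub_sumsmxP => u ->.
exists (fun e => (u e *m <<rigidity_row p e>>%MS *m pinvmx (rigidity_row p e)) 0 0).
rewrite linear_sum; apply: eq_bigr => e _.
have gen_sub : (<<rigidity_row p e>> <= rigidity_row p e)%MS by rewrite genmxE.
rewrite -{1}(mulmxKpV gen_sub) !mulmxA [X in X *m _]mx11_scalar mul_scalar_mx.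
by rewrite linearZ /= rigidity_rowE mxvecK.
Qed.

(* Zero net force and zero net torque: [L] is orthogonal to the infinitesimal
   translations and rotations of [p]. *)
Definition equilibrium (L : 'M[R]_(n, d)) : Prop :=
  (forall i, \sum_w L w i = 0) /\
  (forall i j, \sum_w (L w i * p w j - L w j * p w i) = 0).

Lemma equilibrium_lincomb (I : finType) (P : pred I) (c : I -> R) (M : I -> 'M_(n, d)) :
  (forall a, P a -> equilibrium (M a)) -> equilibrium (\sum_(a | P a) c a *: M a).
Proof.
move=> eqM; split=> [i | i j].
  under eq_bigr do rewrite summxE.
  rewrite exchange_big big1 //= => a Pa.
  by under eq_bigr do rewrite mxE; rewrite -mulr_sumr (eqM a Pa).1 mulr0.
under eq_bigr do rewrite !summxE mulr_suml mulr_suml -sumrB.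
rewrite exchange_big big1 //= => a Pa.
under eq_bigr do rewrite !mxE -!mulrA -mulrBr.
by rewrite -mulr_sumr (eqM a Pa).2 mulr0.
Qed.

Lemma rigidity_mx_nonincident e w i : ~~ incident w e -> rigidity_mx p e w i = 0.
Proof. by rewrite /incident mxE negb_or !(eq_sym _ w) => /andP[/negPf-> /negPf->]. Qed.

Lemma sum_ends e (F : 'I_n -> R) : (forall w, ~~ incident w e -> F w = 0) ->
  \sum_w F w = F (val e).1 + F (val e).2.
Proof.
move=> F0; rewrite (bigD1 (val e).1) // (bigD1 (val e).2) 1?eq_sym ?edge_neq //=.
rewrite big1 ?addr0 // => w /andP[w2 w1].
by apply: F0; rewrite /incident negb_or !(eq_sym _ w) w1 w2.
Qed.

Lemma equilibrium_rigidity_mx e : equilibrium (rigidity_mx p e).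
Proof.
have ne12 := negbTE (edge_neq e).
split=> [i | i j].
  rewrite (sum_ends (e := e)) => [|w /rigidity_mx_nonincident //].
  by rewrite !mxE eqxx eq_sym ne12 eqxx; ring.
rewrite (sum_ends (e := e)) => [|w nincw].
  by rewrite !mxE eqxx eq_sym ne12 eqxx; ring.
by rewrite !rigidity_mx_nonincident // !mul0r subrr.
Qed.

Lemma rigspace_equilibrium X y : (y <= rigspace X)%MS -> equilibrium (vec_mx y).
Proof.
case/rigspace_lincomb=> c ->.
by apply: equilibrium_lincomb => e _; exact: equilibrium_rigidity_mx.
Qed.

Lemma rigspace_vanish X y w i : (forall e, e \in X -> ~~ incident w e) ->
  (y <= rigspace X)%MS -> vec_mx y w i = 0.
Proof.
move=> nincX /rigspace_lincomb[c ->]; rewrite summxE big1 // => e Xe.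
by rewrite mxE rigidity_mx_nonincident ?mulr0 ?nincX.
Qed.

Lemma equilibrium_vertex_support (L : 'M[R]_(n, d)) a : equilibrium L ->
  (forall w i, w != a -> L w i = 0) -> L = 0.
Proof.
move=> [force _] L0; apply/matrixP => w i; rewrite mxE.
have [-> | /L0 -> //] := eqVneq w a.
by rewrite -(force i) (bigD1 a) //= big1 ?addr0 // => v /L0 ->.
Qed.

(* The torque condition makes the load at one end [u] of [e = uv] parallel to
   [p(u) - p(v)], and the force condition makes the load at [v] its opposite. *)
Lemma equilibrium_edge_support (L : 'M[R]_(n, d)) e :
    rigidity_row p e != 0 -> equilibrium L ->
  (forall w i, ~~ incident w e -> L w i = 0) -> (mxvec L <= rigidity_row p e)%MS.
Proof.
rewrite rigidity_row_eq0 negb_forall => /existsP[i0 ne_i0] [force torque] L0.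
have Lb i : L (val e).2 i = - L (val e).1 i.
  apply/eqP; rewrite -addr_eq0 addrC -(sum_ends (F := fun w => L w i)) ?force //.
  by move=> w /L0 ->.
set a := (val e).1 in ne_i0 Lb *; set b := (val e).2 in ne_i0 Lb *.
have La j : L a j * (p a i0 - p b i0) = L a i0 * (p a j - p b j).
  apply/eqP; rewrite -subr_eq0; apply/eqP; rewrite -[RHS](torque j i0) (sum_ends (e := e)).
    by rewrite !Lb; ring.
  by move=> w /L0 Lw; rewrite !Lw !mul0r subrr.
rewrite -subr_eq0 in ne_i0.
pose c := L a i0 / (p a i0 - p b i0).
have Lac j : L a j = c * (p a j - p b j) by rewrite /c mulrAC -La mulfK.
have -> : L = c *: rigidity_mx p e.
  apply/matrixP => w j; rewrite !mxE -/a -/b.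
  have [-> | wa] := eqVneq w a; first exact: Lac.
  have [-> | wb] := eqVneq w b; first by rewrite Lb Lac -mulrN opprB.
  by rewrite L0 ?mulr0 // /incident negb_or !(eq_sym _ w) wa wb.
by rewrite linearZ scalemx_sub.
Qed.

Lemma equilibrium_support_le2 (T : {set 'I_n}) : (#|T| <= 2)%N ->
    (forall e, rigidity_row p e != 0) ->
  let supported L := equilibrium L /\ forall w i, w \notin T -> L w i = 0 in
  (forall L, supported L -> L = 0) \/
  exists e, forall L, supported L -> (mxvec L <= rigidity_row p e)%MS.
Proof.
move=> T_le2 row_neq0 supported.
have [T_le1 | T_gt1] := leqP #|T| 1.
  left=> L [eqL L0]; have [T0 | [a Ta]] := set_0Vmem T.
    by apply/matrixP => w i; rewrite mxE L0 // T0 inE.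
  apply: (equilibrium_vertex_support (a := a) eqL) => w i wa; apply: L0.
  by rewrite (card_le1P T_le1 a Ta w) inE.
have /cards2P[a [b [neq_ab defT]]] : #|T| == 2 by rewrite eqn_leq T_le2.
have [e incE] := exists_edge_pair neq_ab.
right; exists e => L [eqL L0]; apply: equilibrium_edge_support => // w i.
by rewrite incE -defT; exact: L0.
Qed.

End RigiditySpace.

Lemma technicolourI n (D : {set edge n}) (P : {set {set edge n}}) A B e f w :
  A \in P -> B \in P -> A != B -> e \in A -> f \in B -> incident w e -> incident w f ->
  w \in technicolour D P.
Proof.
move=> PA PB neq_AB Ae Bf inc_we inc_wf; rewrite inE.
apply/existsP; exists A; rewrite PA; apply/existsP; exists B; rewrite PB neq_AB.
by apply/existsP; exists e; rewrite Ae; apply/existsP; exists f; rewrite Bf inc_we.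
Qed.

Section PrincipalCap.
Variables (n d : nat) (p : placement n d) (D : {set edge n}).
Implicit Types (A B : {set edge n}) (P Q : {set {set edge n}}).

Definition rigspace_cap Q : 'M[R]_(n * d) :=
  (rigspace p D :&: \bigcap_(A in Q) rigspace p (D :\: A))%MS.

Lemma rigspace_cap_subD Q : (rigspace_cap Q <= rigspace p D)%MS.
Proof. exact: capmxSl. Qed.

Lemma rigspace_cap_sub Q A : A \in Q -> (rigspace_cap Q <= rigspace p (D :\: A))%MS.
Proof. by move=> QA; rewrite (submx_trans (capmxSr _ _)) // (bigcapmx_inf A). Qed.

Lemma sub_rigspace_cap Q m (M : 'M_(m, n * d)) : (M <= rigspace p D)%MS ->
  (forall A, A \in Q -> (M <= rigspace p (D :\: A))%MS) -> (M <= rigspace_cap Q)%MS.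
Proof. by move=> sMD sMQ; rewrite sub_capmx sMD; apply/sub_bigcapmxP. Qed.

Section Partition.
Variable P : {set {set edge n}}.
Hypothesis partP : partition P D.

Lemma partition_part_sub A : A \in P -> A \subset D.
Proof. by move=> PA; rewrite -(cover_partition partP) bigcup_sup. Qed.

(* An edge of a part [A] outside [Q] avoids every part of [Q], so it lies in
   [rigspace_cap Q]. *)
Lemma rigspace_cap_addsmx Q A : Q \subset P -> A \in P -> A \notin Q ->
  (rigspace p D <= rigspace p (D :\: A) + rigspace_cap Q)%MS.
Proof.
move=> sQP PA QA; apply: rigspace_sub => e De.
have [Ae | Ae] := boolP (e \in A); last first.
  by rewrite (submx_trans _ (addsmxSl _ _)) // rigidity_row_sub // !inE Ae.
rewrite (submx_trans _ (addsmxSr _ _)) // sub_rigspace_cap ?rigidity_row_sub //.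
move=> B QB; rewrite rigidity_row_sub // !inE De andbT.
have triv := partition_trivIset partP; have PB := subsetP sQP B QB.
apply: contraNN QA => Be.
by rewrite -(def_pblock triv PA Ae) (def_pblock triv PB Be).
Qed.

(* The rank drops [#|A| - 1] add up because, by [rigspace_cap_addsmx], each
   new space [rigspace p (D :\: A)] is transversal to the previous intersection. *)
Lemma rank_rigspace_cap Q : Q \subset P ->
  (forall A, A \in P -> \rank (rigspace p (D :\: A)) + #|A| = (\rank (rigspace p D)).+1)%N ->
  (\rank (rigspace_cap Q) + \sum_(A in Q) #|A| = \rank (rigspace p D) + #|Q|)%N.
Proof.
move=> + rankA; elim: {Q}_.+1 {-2}Q (ltnSn #|Q|) => // m IHm Q leQm sQP.
have [-> | [A QA]] := set_0Vmem Q.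
  rewrite big_set0 cards0 !addn0; apply/eqmx_rank/andP.
  by rewrite rigspace_cap_subD sub_rigspace_cap // => A; rewrite inE.
have sQ'P : Q :\ A \subset P by rewrite (subset_trans (subsetDl _ _)).
have cardQ : #|Q| = #|Q :\ A|.+1 by rewrite (cardsD1 A) QA.
have rankU' := IHm (Q :\ A) _ sQ'P; rewrite -ltnS -cardQ in rankU'.
have {IHm leQm}rankU' := rankU' leQm.
have rankS := rankA A (subsetP sQP A QA).
set S := rigspace p (D :\: A) in rankS *; set U' := rigspace_cap (Q :\ A) in rankU' *.
have rankU : \rank (rigspace_cap Q) = \rank (S :&: U')%MS.
  apply/eqmx_rank/andP; split.
    rewrite sub_capmx rigspace_cap_sub //=.
    apply: sub_rigspace_cap => [|B]; first exact: rigspace_cap_subD.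
    by rewrite inE => /andP[_ /rigspace_cap_sub].
  apply: sub_rigspace_cap => [|B QB].
    exact: submx_trans (capmxSr _ _) (rigspace_cap_subD _).
  have [-> | neq_BA] := eqVneq B A; first exact: capmxSl.
  by rewrite (submx_trans (capmxSr _ _)) // rigspace_cap_sub // !inE neq_BA.
have rankSU : \rank (S + U')%MS = \rank (rigspace p D).
  apply/eqmx_rank/andP; split.
    by rewrite addsmx_sub rigspaceS ?subsetDl // rigspace_cap_subD.
  by rewrite rigspace_cap_addsmx ?(subsetP sQP) ?setD11.
have := mxrank_sum_cap S U'; rewrite rankSU => rankSU'.
rewrite rankU (big_setD1 A QA) cardQ /=; apply: (@addnI (\rank (rigspace p D))).
rewrite addnA rankSU' -addnA (addnCA (\rank U')) addnA rankS rankU'.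
by rewrite addSn !addnS.
Qed.

(* A monochromatic vertex [w] meets no edge of [D :\: A], where [A] is its
   colour class (or [D] itself if [w] is isolated). *)
Lemma rigspace_cap_vanish y w i : (y <= rigspace_cap P)%MS ->
  w \notin technicolour D P -> vec_mx y w i = 0.
Proof.
move=> sUy techn_w; have coverP := cover_partition partP.
have [/existsP[e /andP[De inc_we]] | no_inc] := boolP [exists e in D, incident w e].
  have /bigcupP[A PA Ae] : e \in cover P by rewrite coverP.
  apply: (rigspace_vanish (X := D :\: A)) (submx_trans sUy (rigspace_cap_sub PA)).
  move=> f; rewrite !inE => /andP[Af Df]; apply/negP => inc_wf; move/negP: techn_w; apply.
  have /bigcupP[B PB Bf] : f \in cover P by rewrite coverP.
  by apply: (technicolourI D PA PB _ Ae Bf inc_we inc_wf); apply: contraNneq Af => ->.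
apply: (rigspace_vanish (X := D)) (submx_trans sUy (rigspace_cap_subD _)) => e De.
apply/negP => inc_we; move/negP: no_inc; apply.
by apply/existsP; exists e; rewrite De.
Qed.

End Partition.

End PrincipalCap.

Lemma rd_principal_complement n d k (D : {set edge n}) P A : (0 < k)%N ->
  kfold_circuit d k D -> principal_partition d k D P -> A \in P ->
  (rd d (D :\: A) + #|A| = (rd d D).+1)%N.
Proof.
move=> k_gt0 /andP[_ /eqP rdD] /andP[partP /eqP defP] PA.
have /[!defP] : D :\: A \in [set D :\: B | B in P] by apply: imset_f.
rewrite inE => /andP[_ /andP[_ /eqP rdDA]].
have sAD := partition_part_sub partP PA.
rewrite cardsD (setIidPr sAD) in rdDA; have := subset_leq_card sAD; lia.
Qed.

Section GenericPlacement.
Variables (n d k : nat) (p : placement n d) (D : {set edge n}) (P : {set {set edge n}}).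
Hypotheses (p_gen : generic_placement p) (partP : partition P D).

Lemma rank_rigspace_cap_principal : (0 < k)%N ->
  kfold_circuit d k D -> principal_partition d k D P ->
  (\rank (rigspace_cap p D P) + k = #|P|)%N.
Proof.
move=> k_gt0 kfoldD princP.
have rankA A : A \in P -> (\rank (rigspace p (D :\: A)) + #|A| = (\rank (rigspace p D)).+1)%N.
  by rewrite -!rig_rank_rigspace !p_gen; exact: rd_principal_complement k_gt0 kfoldD princP.
have := rank_rigspace_cap partP (subxx P) rankA.
rewrite -(card_partition partP) -rig_rank_rigspace p_gen.
by move: kfoldD => /andP[_ /eqP]; lia.
Qed.

Lemma rcl_cap_rigspace A0 x : A0 \in P ->
  (x \in \bigcap_(A in P) rcl d (D :\: A)) = (rigidity_row p x <= rigspace_cap p D P)%MS.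
Proof.
move=> PA0; apply/bigcapP/idP => [rcl_x | sxU A PA]; last first.
  by rewrite (rcl_rigspace p_gen) (submx_trans sxU) ?rigspace_cap_sub.
apply: sub_rigspace_cap => [|A PA]; last by rewrite -(rcl_rigspace p_gen) ?rcl_x.
by rewrite (submx_trans _ (rigspaceS p (subsetDl D A0))) // -(rcl_rigspace p_gen) ?rcl_x.
Qed.

Lemma rigspace_cap_small : (0 < d)%N -> (#|technicolour D P| <= 2)%N ->
  \rank (rigspace_cap p D P) = 0%N \/ exists e, (rigspace_cap p D P <= rigidity_row p e)%MS.
Proof.
move=> d_gt0 techn_le2; set U := rigspace_cap p D P.
have row_neq0 e := generic_rigidity_row_neq0 e d_gt0 p_gen.
have supported i : equilibrium p (vec_mx (row i U)) /\
    forall w j, w \notin technicolour D P -> vec_mx (row i U) w j = 0.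
  split=> [|w j]; last exact/rigspace_cap_vanish/row_sub.
  exact/(rigspace_equilibrium (X := D))/(submx_trans (row_sub i U))/rigspace_cap_subD.
have [U0 | [e sUe]] := equilibrium_support_le2 techn_le2 row_neq0.
  left; apply/eqP; rewrite mxrank_eq0; apply/eqP/row_matrixP => i.
  by rewrite row0 -[row i U]vec_mxK (U0 _ (supported i)) linear0.
by right; exists e; apply/row_subP => i; rewrite -[row i U]vec_mxK (sUe _ (supported i)).
Qed.

(* [rigspace_cap] has rank at most one, and is then spanned by the row of an
   edge joining the two technicolour vertices; that edge lies in every
   closure. *)
Lemma rd_rcl_cap A0 : (0 < d)%N -> (#|technicolour D P| <= 2)%N -> A0 \in P ->
  rd d (\bigcap_(A in P) rcl d (D :\: A)) = \rank (rigspace_cap p D P).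
Proof.
move=> d_gt0 techn_le2 PA0; set I := \bigcap_(A in P) _; set U := rigspace_cap p D P.
have memI x : (x \in I) = (rigidity_row p x <= U)%MS := rcl_cap_rigspace x PA0.
rewrite -p_gen rig_rank_rigspace; apply/eqP; rewrite eqn_leq mxrankS /=; last first.
  by apply: rigspace_sub => x; rewrite memI.
have [-> // | [e sUe]] := rigspace_cap_small d_gt0 techn_le2.
have [-> // | U_gt0] := posnP (\rank U).
have seU : (rigidity_row p e <= U)%MS.
  rewrite -(mxrank_leqif_sup sUe).2 eqn_leq mxrankS //=.
  exact: leq_trans (rank_leq_row _) U_gt0.
by apply: leq_trans (mxrankS sUe) (mxrankS (rigidity_row_sub _ _)); rewrite memI seU.
Qed.

End GenericPlacement.

Theorem theorem3p12 (n d k : nat) (D : {set edge n}) (P : {set {set edge n}}) :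
  (1 <= d)%N -> (1 <= k)%N ->
  kfold_circuit d k D ->
  principal_partition d k D P ->
  (#|technicolour D P| <= 2)%N ->
  balanced d k D P.
Proof.
move=> d_gt0 k_gt0 kfoldD princP techn_le2.
have [p p_gen] := generic_placement_exists n d.
have partP : partition P D by case/andP: princP.
have rankU := rank_rigspace_cap_principal p_gen partP k_gt0 kfoldD princP.
have [A0 PA0] : exists A0, A0 \in P by apply/card_gt0P; rewrite -rankU addn_gt0 k_gt0 orbT.
by rewrite /balanced (rd_rcl_cap p_gen partP d_gt0 techn_le2 PA0) -rankU PoszD addrK.
Qed.
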